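(* For all integers $m_1,m_2\geq 1$ and every $\tau\in\mathbb{Z}$, the number \[ n_{(m_1,m_2)}(\tau)=\frac{1}{m_1+m_2}\sum_{d\mid m_1,\ d\mid m_2}\mu(d)\,(-1)^{(m_1+m_2)(\tau+1)/d}\binom{(m_1\tau+m_1)/d-1}{m_1/d}\binom{(m_2\tau+m_2)/d}{m_2/d} \] is an integer. *)

From HB Require Import structures.
From mathcomp Require Import all_boot all_order all_algebra.
Set Implicit Arguments. Unset Strict Implicit. Unset Printing Implicit Defensive.
Import Order.TTheory GRing.Theory Num.Theory.
Local Open Scope ring_scope.

Definition moebius (n : nat) : int :=
  if all (fun p => logn p n == 1%N) (primes n) then (-1) ^+ size (primes n) else 0.

Definition gbinom (a : int) (k : nat) : rat :=
  (\prod_(i < k) (a - i%:Z)%:~R) / (k`!)%:R.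

Definition nDT (m1 m2 : nat) (tau : int) : rat :=
  ((m1 + m2)%:R)^-1 *
  \sum_(1 <= d < m1.+1 | ((d %| m1) && (d %| m2))%N)
     ((moebius d)%:~R
      * (-1) ^ (((m1 + m2)%:Z * (tau + 1)) %/ d%:Z)%Z
      * gbinom (((m1%:Z * tau + m1%:Z) %/ d%:Z)%Z - 1) (m1 %/ d)
      * gbinom (((m2%:Z * tau + m2%:Z) %/ d%:Z)%Z) (m2 %/ d)).

From HB Require Import structures.
From mathcomp Require Import all_boot all_order all_algebra.
From mathcomp Require Import zify ring.
Import Order.TTheory GRing.Theory Num.Theory.

(* Write tau = S - 1 or tau = -S with S > 0.  Then the d-th summand of n_(m1,m2)(tau) is
   mu(d) sbprod S (m1/d) (m2/d), resp. mu(d) sbprod S (m2/d) (m1/d), where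
   sbprod S m n = (-1)^((m + n) S) C(mS - 1, m) C(nS, n).  With g = gcd(m1, m2) and
   m_i = g a_i, it remains to show, one prime p at a time, that p^(v_p(g) + v_p(a1 + a2))
   divides the sum over d | g of mu(d) sbprod S ((g/d) a1) ((g/d) a2).  For m, n not both
   divisible by p:
   - By Kummer's carry count, p^(v_p(m + n)) divides sbprod S m n: each p^k dividing m + n
     but not m forces a carry in one of the additions m + (mS - 1 - m) and n + (nS - n).
   - Since (pA)! = p^A A! Q(A), with Q(A) = p'prod p 0 A the product of the integers up to
     pA prime to p, C(pA, pB) / C(A, B) is a ratio of products of integers prime to p that
     are congruent modulo p^(j+1) when p^j divides B.  Hence sbprod S (p^(j+1) m) (p^(j+1) n)
     and sbprod S (p^j m) (p^j n) agree modulo p^(v_p(m + n) + j + 1).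
   Pairing d with p d in the Moebius sum, the first fact settles v_p(g) = 0 and the second
   one v_p(g) > 0. *)

Lemma eq_prod_mod (I : Type) (r : seq I) (P : pred I) (F G : I -> nat) q :
  (forall i, P i -> F i = G i %[mod q]) ->
  \prod_(i <- r | P i) F i = \prod_(i <- r | P i) G i %[mod q].
Proof.
move=> eqFG; elim/big_rec2: _ => // i x y Pi eqxy.
by rewrite -modnMm eqFG // eqxy modnMm.
Qed.

Definition p'prod (p a n : nat) : nat :=
  \prod_(a <= i < a + p * n | ~~ (p %| i.+1)) i.+1.

Lemma p'prod_gt0 p a n : 0 < p'prod p a n.
Proof. by rewrite prodn_cond_gt0. Qed.

Lemma coprime_p'prod p a n : prime p -> coprime p (p'prod p a n).
Proof.
move=> p_pr; apply: (big_ind (coprime p)) => [|x y|i]; first exact: coprimen1.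
  by rewrite coprimeMr => -> ->.
by rewrite prime_coprime.
Qed.

Lemma p'prodD p a m n : p'prod p a (m + n) = p'prod p a m * p'prod p (a + p * m) n.
Proof. by rewrite /p'prod mulnDr addnA -big_cat_nat ?leq_addr. Qed.

Lemma p'prod_mod p a n : p %| a -> p'prod p a n = p'prod p 0 n %[mod a].
Proof.
move=> dvd_pa; rewrite /p'prod -{1}[a]add0n big_addn addKn.
rewrite (eq_bigl (fun i => ~~ (p %| i.+1))) => [|i]; last by rewrite -addSn dvdn_addl.
by apply: eq_prod_mod => i _; rewrite -addSn modnDr.
Qed.

Lemma prod_block_multiples p j : 0 < p ->
  \prod_(j * p <= i < j.+1 * p | p %| i.+1) i.+1 = j.+1 * p.
Proof.
move=> p_gt0; set top := (j.+1 * p).-1.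
have def_top : top.+1 = j.+1 * p by rewrite prednK ?muln_gt0.
have top_in : j * p <= top < j.+1 * p.
  apply/andP; split; last by rewrite -def_top.
  by rewrite -ltnS def_top mulSn -{1}[j * p]add0n ltn_add2r.
rewrite (congr_big_nat (j * p) (j.+1 * p) (fun i => i == top) (fun i => i.+1)) //.
  by rewrite big_nat1_eq top_in def_top.
move=> i /andP[lo hi]; apply/idP/eqP => [/dvdnP[k def_i]|->]; last first.
  by rewrite def_top dvdn_mull.
have lt_jk : j < k by rewrite -(ltn_pmul2r p_gt0) -def_i ltnS.
have le_kj : k <= j.+1 by rewrite -(leq_pmul2r p_gt0) -def_i.
have def_k : k = j.+1 by apply/eqP; rewrite eqn_leq le_kj.
by apply/succn_inj; rewrite def_i def_top def_k.
Qed.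

Lemma fact_pmul p n : 0 < p -> (p * n)`! = p ^ n * n`! * p'prod p 0 n.
Proof.
move=> p_gt0; rewrite fact_prod big_add1 /= (bigID (fun i => p %| i.+1)) /=.
rewrite /p'prod add0n; congr (_ * _).
rewrite [p * n]mulnC big_mkcond big_nat_mul.
rewrite (eq_big_nat _ _ (F2 := fun j => j.+1 * p)) => [|j _]; last first.
  by rewrite -big_mkcond prod_block_multiples.
by rewrite big_split /= prod_nat_const_nat subn0 fact_prod big_add1 mulnC.
Qed.

Lemma bin_pmul p A B : 0 < p -> B <= A ->
  'C(p * A, p * B) * p'prod p 0 (A - B) = 'C(A, B) * p'prod p (p * B) (A - B).
Proof.
move=> p_gt0 le_BA.
set K := p ^ B * B`! * p'prod p 0 B * (p ^ (A - B) * (A - B)`!).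
have K_gt0 : 0 < K by rewrite !muln_gt0 !expn_gt0 p_gt0 !fact_gt0 p'prod_gt0.
apply/eqP; rewrite -(eqn_pmul2l K_gt0); apply/eqP.
transitivity ('C(p * A, p * B) * ((p * B)`! * (p * A - p * B)`!)).
  by rewrite -mulnBr !fact_pmul // /K; ring.
have def_A : A = B + (A - B) by rewrite subnKC.
rewrite bin_fact ?leq_mul2l ?le_BA ?orbT // fact_pmul // {1 3}def_A p'prodD expnD.
by rewrite -(bin_fact le_BA) /K; ring.
Qed.

Definition carry (q x y : nat) : bool := q <= x %% q + y %% q.

Lemma logn_fact_widen p n L : prime p -> n < L ->
  logn p n`! = \sum_(1 <= k < L) n %/ p ^ k.
Proof.
move=> p_pr lt_nL; rewrite logn_fact // (big_nat_widen _ _ _ _ _ lt_nL) big_mkcond.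
apply: eq_big_nat => k _; case: ifP => // /negbT; rewrite -leqNgt => lt_nk.
by rewrite divn_small // (leq_trans lt_nk) // ltnW // ltn_expl // prime_gt1.
Qed.

Lemma logn_bin_carry p X Y L : prime p -> X + Y < L ->
  logn p 'C(X + Y, X) = \sum_(1 <= k < L) carry (p ^ k) X Y.
Proof.
move=> p_pr lt_XY_L.
have lt_XL : X < L by apply: leq_ltn_trans lt_XY_L; rewrite leq_addr.
have lt_YL : Y < L by apply: leq_ltn_trans lt_XY_L; rewrite leq_addl.
have := congr1 (logn p) (bin_fact (leq_addr Y X)); rewrite addKn.
rewrite !lognM ?muln_gt0 ?fact_gt0 ?bin_gt0 ?leq_addr // !(@logn_fact_widen p _ L) //.
under [in RHS]eq_bigr => k _ do rewrite divnD ?expn_gt0 ?prime_gt0 //.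
rewrite !big_split /= /carry; lia.
Qed.

Lemma carry_of_dvd q x1 y1 x2 y2 : ~~ (q %| x1) -> q %| x1 + x2 ->
  q %| (x1 + y1 + (x2 + y2)).+1 -> carry q x1 y1 || carry q x2 y2.
Proof.
move=> ndvd_x1 dvd_x dvd_sum.
have q_gt0 : 0 < q.
  rewrite lt0n; apply: contraNneq ndvd_x1 => q0.
  by move: dvd_x; rewrite q0 !dvd0n addn_eq0 => /andP[].
have eq_q z : q %| z -> 0 < z < q.*2 -> z = q.
  case/dvdnP=> c ->; rewrite -mul2n ltn_pmul2r // muln_gt0 q_gt0 andbT.
  by case: c => [|[|c]] //=; rewrite mul1n.
rewrite /carry; apply: contraLR isT; rewrite negb_or -!ltnNge => /andP[lt1 lt2].
have a1_gt0 : 0 < x1 %% q by rewrite lt0n.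
have a2_lt := ltn_pmod x2 q_gt0.
have e1 : (x1 + y1) %% q = x1 %% q + y1 %% q by rewrite -modnDm modn_small.
have e2 : (x2 + y2) %% q = x2 %% q + y2 %% q by rewrite -modnDm modn_small.
have : q %| ((x1 + y1) %% q + (x2 + y2) %% q).+1.
  by rewrite -addn1 /dvdn -modnDml modnDm modnDml addn1.
have : q %| x1 %% q + x2 %% q by rewrite /dvdn modnDm.
(* Without carries the residues would satisfy a1 + a2 = q = (a1 + b1) + (a2 + b2) + 1. *)
rewrite e1 e2 => /eq_q sum_a /eq_q sum_b.
move: (x1 %% q) (x2 %% q) (y1 %% q) (y2 %% q) lt1 lt2 a1_gt0 a2_lt sum_a sum_b.
move=> a1 a2 b1 b2; clear -q; lia.
Qed.

Lemma logn_lt p n : prime p -> 0 < n -> logn p n < n.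
Proof.
move=> p_pr n_gt0; apply: leq_trans (ltn_expl _ (prime_gt1 p_pr)) _.
exact: dvdn_leq n_gt0 (pfactor_dvdnn p n).
Qed.

Lemma mul_bin_pred m S : 0 < m -> S * 'C(m * S - 1, m) = (S - 1) * 'C(m * S, m).
Proof.
move=> m_gt0; apply/eqP; rewrite -(eqn_pmul2l m_gt0) !mulnA [m * S]mulnC.
have := mul_bin_down (S * m) m; rewrite -subn1 => ->.
by rewrite [S * m]mulnC -{2}[m]muln1 -mulnBr.
Qed.

Definition bprod (S m n : nat) : nat := 'C(m * S - 1, m) * 'C(n * S, n).

Lemma bprod_pmul p S m n : 0 < p -> 0 < S -> 0 < m ->
  bprod S (p * m) (p * n) * (p'prod p 0 (m * (S - 1)) * p'prod p 0 (n * (S - 1))) =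
  bprod S m n * (p'prod p (p * m) (m * (S - 1)) * p'prod p (p * n) (n * (S - 1))).
Proof.
move=> p_gt0 S_gt0 m_gt0.
have mulS_sub X : X * S - X = X * (S - 1) by rewrite mulnBr muln1.
have bin_m := bin_pmul p (m * S) m p_gt0 (leq_pmulr m S_gt0).
have bin_n := bin_pmul p (n * S) n p_gt0 (leq_pmulr n S_gt0).
rewrite mulS_sub mulnA in bin_m; rewrite mulS_sub mulnA in bin_n.
apply/eqP; rewrite -(eqn_pmul2l S_gt0); apply/eqP; rewrite /bprod.
set Q0m := p'prod p 0 _; set Q0n := p'prod p 0 _.
set Qm := p'prod p (p * m) _; set Qn := p'prod p (p * n) _.
transitivity (S * 'C(p * m * S - 1, p * m) * ('C(p * n * S, p * n) * Q0n) * Q0m).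
  by ring.
rewrite mul_bin_pred ?muln_gt0 ?p_gt0 //.
transitivity ((S - 1) * ('C(p * m * S, p * m) * Q0m) * ('C(p * n * S, p * n) * Q0n)).
  by ring.
rewrite bin_m bin_n.
transitivity ((S - 1) * 'C(m * S, m) * 'C(n * S, n) * (Qm * Qn)); first by ring.
by rewrite -mul_bin_pred //; ring.
Qed.

Lemma bprod_pmul_dvd p S m n k : prime p -> 0 < S -> 0 < m ->
  p ^ k %| bprod S m n -> p ^ k %| bprod S (p * m) (p * n).
Proof.
move=> p_pr S_gt0 m_gt0 dvd_k; have p_gt0 := prime_gt0 p_pr.
have coprime_Q : coprime (p ^ k) (p'prod p 0 (m * (S - 1)) * p'prod p 0 (n * (S - 1))).
  by apply: coprimeXl; rewrite coprimeMr !coprime_p'prod.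
by rewrite -(Gauss_dvdl _ coprime_Q) bprod_pmul // (dvdn_mulr _ dvd_k).
Qed.

Lemma bprod_pexp_dvd p S m n k j : prime p -> 0 < S -> 0 < m ->
  p ^ k %| bprod S m n -> p ^ k %| bprod S (p ^ j * m) (p ^ j * n).
Proof.
move=> p_pr S_gt0 m_gt0 dvd_k; elim: j => [|j IHj]; first by rewrite !mul1n.
by rewrite expnS -!mulnA bprod_pmul_dvd // muln_gt0 expn_gt0 prime_gt0.
Qed.

Lemma bprod_pmul_congr p S m n k j : prime p -> 0 < S -> 0 < m ->
  p ^ j %| m -> p ^ j %| n -> p ^ k %| bprod S m n ->
  ((p ^ (k + j.+1))%:Z %| ((bprod S (p * m) (p * n))%:Z - (bprod S m n)%:Z)%R)%Z.
Proof.
move=> p_pr S_gt0 m_gt0 dvd_m dvd_n dvd_k; have p_gt0 := prime_gt0 p_pr.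
set Q := p'prod p 0 (m * (S - 1)) * p'prod p 0 (n * (S - 1)).
set R := p'prod p (p * m) (m * (S - 1)) * p'prod p (p * n) (n * (S - 1)).
have eqRQ : R = Q %[mod p ^ j.+1].
  have mod_pj X a : p ^ j %| X -> p'prod p (p * X) a = p'prod p 0 a %[mod p ^ j.+1].
    move=> dvd_X; have dvd_pX : p ^ j.+1 %| p * X by rewrite expnS dvdn_pmul2l.
    by rewrite -[LHS](modn_dvdm _ dvd_pX) -[RHS](modn_dvdm _ dvd_pX) p'prod_mod ?dvdn_mulr.
  by rewrite -modnMm !mod_pj // modnMm.
have coprime_Q : coprime (p ^ (k + j.+1)) Q.
  by apply: coprimeXl; rewrite coprimeMr !coprime_p'prod.
rewrite -(@Gauss_dvdzl _ _ Q%:Z) ?coprimezE //.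
have -> : (((bprod S (p * m) (p * n))%:Z - (bprod S m n)%:Z) * Q%:Z =
          (bprod S m n)%:Z * (R%:Z - Q%:Z))%R.
  by rewrite mulrBl mulrBr -!PoszM bprod_pmul.
rewrite expnD PoszM; apply: dvdz_mul; first by rewrite dvdzE.
by rewrite -eqz_mod_dvd !modz_nat eqRQ.
Qed.

Lemma pfactor_dvd_bprod p S m n : prime p -> 0 < S -> 0 < m ->
  ~~ (p %| m) || ~~ (p %| n) -> p ^ logn p (m + n) %| bprod S m n.
Proof.
move=> p_pr S_gt0 m_gt0; have [dvd_pm /= ndvd_pn|ndvd_pm _] := boolP (p %| m).
  by rewrite logn_coprime ?dvd1n // prime_coprime // dvdn_addr.
have [S_le1|S_gt1] := leqP S 1.
  have -> : S = 1 by apply/eqP; rewrite eqn_leq S_le1.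
  by rewrite /bprod muln1 bin_small ?dvdn0 // subn1 ltn_predL.
have lt_mS : m < m * S by rewrite -{1}[m]muln1 ltn_pmul2l.
have le_nS : n <= n * S by rewrite leq_pmulr.
have def_mS : m * S - 1 = m + (m * S - 1 - m).
  by rewrite subnKC // -ltnS subn1 prednK // (leq_trans _ lt_mS).
have def_nS : n * S = n + (n * S - n) by rewrite subnKC.
have def_sum : (m + (m * S - 1 - m) + (n + (n * S - n))).+1 = (m + n) * S.
  by rewrite -def_mS -def_nS mulnDl -addSn subn1 prednK // (leq_trans _ lt_mS).
set e := logn p (m + n); set L := ((m + n) * S).+1.
have lt_eL : e < L.
  by rewrite ltnS ltnW // (leq_trans (logn_lt _ _ p_pr (ltn_addr n m_gt0))) // leq_pmulr.
have lt_mL : m + (m * S - 1 - m) < L by rewrite /L -def_sum ltnS; apply/leqW/leq_addr.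
have lt_nL : n + (n * S - n) < L by rewrite /L -def_sum ltnS; apply/leqW/leq_addl.
have /andP[C1_gt0 C2_gt0] : (0 < 'C(m * S - 1, m)) && (0 < 'C(n * S, n)).
  by rewrite !bin_gt0 le_nS def_mS leq_addr.
rewrite pfactor_dvdn ?muln_gt0 ?C1_gt0 // /bprod lognM //.
rewrite def_mS def_nS !(@logn_bin_carry p _ _ L) // -big_split /=.
rewrite (big_cat_nat (ltn0Sn e) lt_eL) /=; apply: leq_trans (leq_addr _ _).
apply: (@leq_trans (\sum_(1 <= k < e.+1) 1)); first by rewrite sum_nat_const_nat muln1 subn1.
rewrite big_nat_cond [leqRHS]big_nat_cond; apply: leq_sum => k /andP[/andP[k_gt0 k_le_e] _].
have dvd_pk_mn : p ^ k %| m + n.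
  by apply: dvdn_trans (pfactor_dvdnn p (m + n)); rewrite dvdn_exp2l.
rewrite lt0n addn_eq0 negb_and !eqb0 !negbK; apply: carry_of_dvd => //.
  by apply: contra ndvd_pm; apply: dvdn_trans; rewrite -{1}[p]expn1 dvdn_exp2l.
by rewrite def_sum dvdn_mulr.
Qed.

Local Open Scope ring_scope.

Lemma moebius_pmul p d : prime p -> ~~ (p %| d)%N -> (0 < d)%N ->
  moebius (p * d) = - moebius d.
Proof.
move=> p_pr ndvd_pd d_gt0; have p_gt0 := prime_gt0 p_pr.
have primes_pd : perm_eq (primes (p * d)) (p :: primes d).
  apply: uniq_perm => [|/=|q]; first exact: primes_uniq.
    by rewrite primes_uniq mem_primes (negbTE ndvd_pd) !andbF.
  by rewrite primesM // primes_prime // !inE.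
rewrite /moebius (perm_all _ primes_pd) (perm_size primes_pd) /=.
rewrite lognM // logn_prime // eqxx logn_coprime ?prime_coprime //=.
rewrite (eq_in_all (a2 := fun q => logn q d == 1%N)) => [|q]; last first.
  rewrite mem_primes => /and3P[q_pr _ dvd_qd]; rewrite lognM // logn_prime //.
  by have [eq_qp|] := eqVneq q p; [rewrite -eq_qp dvd_qd in ndvd_pd | rewrite add0n].
by case: all; rewrite ?oppr0 // exprS mulN1r.
Qed.

Lemma moebius_pmul_dvd p d : prime p -> (p %| d)%N -> (0 < d)%N -> moebius (p * d) = 0.
Proof.
move=> p_pr dvd_pd d_gt0; have p_gt0 := prime_gt0 p_pr.
rewrite /moebius; case: ifP => // /allP/(_ p).
rewrite mem_primes p_pr muln_gt0 p_gt0 d_gt0 dvdn_mulr //= => /(_ isT).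
rewrite lognM // logn_prime // eqxx.
have : (0 < logn p d)%N by rewrite logn_gt0 mem_primes p_pr d_gt0 dvd_pd.
by case: (logn p d).
Qed.

Lemma sum_moebius_pair (G : nat -> int) g p : prime p -> (0 < g)%N -> (p %| g)%N ->
  \sum_(d <- divisors g) moebius d * G d =
  \sum_(d <- divisors (g %/ p) | ~~ (p %| d)%N) moebius d * (G d - G (p * d)%N).
Proof.
move=> p_pr g_gt0 dvd_pg; have p_gt0 := prime_gt0 p_pr.
have gp_gt0 : (0 < g %/ p)%N by rewrite divn_gt0 // dvdn_leq.
have multiples : perm_eq [seq d <- divisors g | (p %| d)%N]
                         [seq (p * d)%N | d <- divisors (g %/ p)].
  apply: uniq_perm => [||d]; rewrite ?filter_uniq ?divisors_uniq //.
    by rewrite map_inj_uniq ?divisors_uniq // => c1 c2 /eqP; rewrite eqn_pmul2l // => /eqP.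
  rewrite mem_filter -dvdn_divisors //; apply/andP/mapP => [[/dvdnP[c ->] dvd_g]|[c]].
    by exists c; rewrite 1?mulnC // -dvdn_divisors // dvdn_divRL.
  by rewrite -dvdn_divisors // dvdn_divRL // => dvd_g ->; rewrite dvdn_mulr // mulnC.
have coprimes : perm_eq [seq d <- divisors g | ~~ (p %| d)%N]
                        [seq d <- divisors (g %/ p) | ~~ (p %| d)%N].
  apply: uniq_perm => [||d]; rewrite ?filter_uniq ?divisors_uniq // !mem_filter.
  rewrite -!dvdn_divisors //; case: (boolP (p %| d)%N) => //= ndvd_pd.
  have co_dp : coprime d p by rewrite coprime_sym prime_coprime.
  by rewrite -{1}(divnK dvd_pg) Gauss_dvdl.
rewrite (bigID (fun d => p %| d)%N) /=.
rewrite -[in X in X + _ = _]big_filter (perm_big _ multiples) big_map.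
rewrite -[in X in _ + X = _]big_filter (perm_big _ coprimes) big_filter.
rewrite (bigID (fun d => p %| d)%N) /= [X in X + _ + _]big1_seq ?add0r; last first.
  move=> d /andP[dvd_pd]; rewrite -dvdn_divisors // => /(dvdn_gt0 gp_gt0) d_gt0.
  by rewrite moebius_pmul_dvd ?mul0r.
rewrite -big_split /=; apply: eq_bigr => d ndvd_pd.
have d_gt0 : (0 < d)%N by rewrite lt0n; apply: contraNneq ndvd_pd => ->; exact: dvdn0.
by rewrite moebius_pmul // mulNr addrC mulrBr.
Qed.

Lemma dvdz_sum_moebius (F : nat -> int) p e g : prime p -> (0 < g)%N ->
  (forall k, (k %| g)%N -> ~~ (p %| k)%N -> ((p ^ e)%:Z %| F k)%Z) ->
  (forall k, (p * k %| g)%N -> ((p ^ (e + logn p k).+1)%:Z %| F (p * k)%N - F k)%Z) ->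
  ((p ^ (e + logn p g))%:Z %| \sum_(d <- divisors g) moebius d * F (g %/ d)%N)%Z.
Proof.
move=> p_pr g_gt0 F_coprime F_congr; have p_gt0 := prime_gt0 p_pr.
have [r0|r_gt0] := posnP (logn p g).
  rewrite r0 addn0 big_seq; apply: rpred_sum => d; rewrite -dvdn_divisors // => dvd_dg.
  apply/dvdz_mull/F_coprime; first exact: dvdn_div.
  apply/negP => dvd_p; suff : (0 < logn p g)%N by rewrite r0.
  by rewrite logn_gt0 mem_primes p_pr g_gt0 (dvdn_trans dvd_p (dvdn_div dvd_dg)).
have dvd_pg : (p %| g)%N by move: r_gt0; rewrite logn_gt0 mem_primes => /and3P[].
have gp_gt0 : (0 < g %/ p)%N by rewrite divn_gt0 // dvdn_leq.
rewrite (sum_moebius_pair _ _ _ p_pr g_gt0 dvd_pg) big_seq_cond; apply: rpred_sum => d.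
rewrite -dvdn_divisors // => /andP[dvd_d ndvd_pd].
have dvd_pd_g : (p * d %| g)%N by rewrite -(divnK dvd_pg) mulnC dvdn_pmul2r.
have d_gt0 : (0 < d)%N by apply: dvdn_gt0 gp_gt0 dvd_d.
set k := (g %/ (p * d))%N.
have def_gd : (g %/ d = p * k)%N by rewrite -{1}(divnK dvd_pd_g) mulnA mulnK // mulnC.
have logn_k : logn p k = (logn p g).-1.
  have logn_pd : logn p (p * d) = 1%N.
    by rewrite lognM // (logn_prime p p_pr) eqxx logn_coprime ?prime_coprime.
  by rewrite logn_div // logn_pd subn1.
have dvd_dg : (d %| g)%N := dvdn_trans dvd_d (dvdn_div dvd_pg).
apply: dvdz_mull; move: (F_congr k); rewrite -def_gd logn_k -addnS prednK //.
by apply; apply: dvdn_div.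
Qed.

Definition sbprod (S m n : nat) : int := (-1) ^+ ((m + n) * S) * (bprod S m n)%:Z.

Lemma pfactor_dvd_sbprod p S m n : prime p -> (0 < S)%N -> (0 < m)%N ->
  ~~ (p %| m)%N || ~~ (p %| n)%N -> ((p ^ logn p (m + n))%:Z %| sbprod S m n)%Z.
Proof. by move=> *; apply/dvdz_mull; rewrite dvdzE pfactor_dvd_bprod. Qed.

Lemma sbprod_pexp_congr p S j m n : prime p -> (0 < S)%N -> (0 < m)%N ->
  ~~ (p %| m)%N || ~~ (p %| n)%N ->
  ((p ^ (logn p (m + n) + j).+1)%:Z %|
     sbprod S (p ^ j.+1 * m) (p ^ j.+1 * n) - sbprod S (p ^ j * m) (p ^ j * n))%Z.
Proof.
move=> p_pr S_gt0 m_gt0 ndvd_mn.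
set e := logn p (m + n); set M := (p ^ j * m)%N; set N := (p ^ j * n)%N.
have M_gt0 : (0 < M)%N by rewrite muln_gt0 expn_gt0 prime_gt0.
have dvd_e : (p ^ e %| bprod S M N)%N.
  by apply: bprod_pexp_dvd => //; apply: pfactor_dvd_bprod.
have := @bprod_pmul_congr p S M N e j p_pr S_gt0 M_gt0 (dvdn_mulr _ (dvdnn _))
  (dvdn_mulr _ (dvdnn _)) dvd_e.
rewrite -addnS !expnS -!mulnA -/M -/N /sbprod -mulnDr -mulnA.
set k := ((M + N) * S)%N; rewrite -signr_odd oddM => congr_e.
have [p_eq2|p_odd] := even_prime p_pr; last first.
  by rewrite p_odd /= signr_odd -mulrBr dvdz_mull.
(* For p = 2 the two signs differ only when 2^j (m + n) S is odd, that is when j = 0 and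
   e = 0; then divisibility by 2 is all that is needed. *)
subst p; rewrite /= expr0 mul1r in congr_e *.
have [k_odd|k_even] := boolP (odd k); last by rewrite -signr_odd (negbTE k_even) mul1r.
have /andP[/andP[pj_odd mn_odd] _] : (odd (2 ^ j) && odd (m + n)) && odd S.
  by move: k_odd; rewrite /k /M /N -mulnDr !oddM.
have j0 : j = 0%N by move: pj_odd; rewrite oddX orbF => /eqP.
have e0 : e = 0%N by rewrite /e logn_coprime // prime_coprime // dvdn2 mn_odd.
subst j; rewrite e0 -signr_odd k_odd mulN1r opprK /= in congr_e *.
set B1 := (bprod S (2 * M) (2 * N))%:Z; set B := (bprod S M N)%:Z.
have -> : B1 + B = B1 - B + B *+ 2 by rewrite mulr2n addrA subrK.
by rewrite rpredD // -mulr_natl dvdz_mulr.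
Qed.

Lemma dvdz_sum_moebius_sbprod S g a b :
  (0 < S)%N -> (0 < g)%N -> (0 < a)%N -> coprime a b ->
  ((g * (a + b))%:Z %|
     \sum_(d <- divisors g) moebius d * sbprod S (g %/ d * a) (g %/ d * b))%Z.
Proof.
move=> S_gt0 g_gt0 a_gt0 co_ab.
have gab_gt0 : (0 < g * (a + b))%N by rewrite muln_gt0 g_gt0 addn_gt0 a_gt0.
rewrite dvdzE /=; apply/(dvdn_partP _ gab_gt0) => p; rewrite mem_primes => /and3P[p_pr _ _].
rewrite p_part lognM ?addn_gt0 ?a_gt0 // addnC.
set e := logn p (a + b).
have ndvd_ab : ~~ (p %| a)%N || ~~ (p %| b)%N.
  by rewrite -negb_and -dvdn_gcd (eqP co_ab) Euclid_dvd1.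
have logn_mul c : (0 < c)%N -> ~~ (p %| c)%N -> logn p (c * a + c * b) = e.
  move=> c_gt0 ndvd_pc.
  by rewrite -mulnDr lognM ?addn_gt0 ?a_gt0 // logn_coprime ?prime_coprime.
have ndvd_mul c : ~~ (p %| c)%N -> ~~ (p %| c * a)%N || ~~ (p %| c * b)%N.
  by move=> ndvd_pc; rewrite !Euclid_dvdM // (negbTE ndvd_pc).
suff : ((p ^ (e + logn p g))%:Z %| \sum_(d <- divisors g)
           moebius d * sbprod S (g %/ d * a) (g %/ d * b))%Z by [].
apply: (dvdz_sum_moebius (fun k => sbprod S (k * a) (k * b))) => // k.
  move=> /(dvdn_gt0 g_gt0) k_gt0 ndvd_pk; rewrite -(logn_mul k) //.
  by apply: pfactor_dvd_sbprod; rewrite ?muln_gt0 ?k_gt0 ?ndvd_mul.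
move=> /(dvdn_gt0 g_gt0); rewrite muln_gt0 => /andP[_ k_gt0].
have [c co_pc def_k] := pfactor_coprime p_pr k_gt0.
have c_gt0 : (0 < c)%N by move: k_gt0; rewrite def_k muln_gt0 => /andP[].
have ndvd_pc : ~~ (p %| c)%N by rewrite -prime_coprime.
have scale x : (k * x = p ^ logn p k * (c * x))%N by rewrite {1}def_k; ring.
have pscale x : (p * k * x = p ^ (logn p k).+1 * (c * x))%N.
  by rewrite -mulnA scale expnS mulnA.
rewrite -(logn_mul c) // !pscale !scale.
by apply: sbprod_pexp_congr; rewrite ?muln_gt0 ?c_gt0 ?ndvd_mul.
Qed.

Lemma dvdz_sum_moebius_gcd S m1 m2 : (0 < S)%N -> (0 < m1)%N ->
  ((m1 + m2)%:Z %| \sum_(d <- divisors (gcdn m1 m2))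
                     moebius d * sbprod S (m1 %/ d) (m2 %/ d))%Z.
Proof.
move=> S_gt0 m1_gt0; set g := gcdn m1 m2.
have g_gt0 : (0 < g)%N by rewrite gcdn_gt0 m1_gt0.
have def_m1 : m1 = (m1 %/ g * g)%N by rewrite divnK ?dvdn_gcdl.
have def_m2 : m2 = (m2 %/ g * g)%N by rewrite divnK ?dvdn_gcdr.
have co_m12 : coprime (m1 %/ g) (m2 %/ g).
  by rewrite /coprime -(eqn_pmul2r g_gt0) muln_gcdl -def_m1 -def_m2 mul1n.
have divE m d : m = (m %/ g * g)%N -> (d %| g)%N -> (m %/ d = g %/ d * (m %/ g))%N.
  by move=> def_m dvd_dg; rewrite {1}def_m -muln_divA // mulnC.
under eq_big_seq => d.
  rewrite -dvdn_divisors // => dvd_dg.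
  by rewrite (divE m1 d def_m1 dvd_dg) (divE m2 d def_m2 dvd_dg); over.
have -> : (m1 + m2 = g * (m1 %/ g + m2 %/ g))%N.
  by rewrite mulnDr !(mulnC g) -def_m1 -def_m2.
by apply: dvdz_sum_moebius_sbprod; rewrite // divn_gt0 // dvdn_leq // dvdn_gcdl.
Qed.

Lemma gbinom_nat (n k : nat) : gbinom n k = 'C(n, k)%:R.
Proof.
rewrite /gbinom; have fact_neq0 : (k`!)%:R != 0 :> rat by rewrite pnatr_eq0 -lt0n fact_gt0.
apply: (canLR (mulfK fact_neq0)); rewrite -natrM bin_ffact ffact_prod natr_prod.
have [le_kn|lt_nk] := leqP k n.
  by apply: eq_bigr => i _; rewrite subzn // (leq_trans (ltnW (ltn_ord i))).
by rewrite (bigD1 (Ordinal lt_nk)) //= subrr mul0r (bigD1 (Ordinal lt_nk)) //= subnn mul0r.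
Qed.

Lemma gbinomN (x k : nat) : (0 < k)%N ->
  gbinom (- x%:Z) k = (-1) ^+ k * 'C(x + k - 1, k)%:R.
Proof.
move=> k_gt0; rewrite -gbinom_nat /gbinom mulrA; congr (_ / _).
rewrite (eq_bigr (fun i : 'I_k => - ((x%:Z + i%:Z)%:~R : rat))) => [|i _]; last first.
  by rewrite -opprD rmorphN.
rewrite prodrN card_ord; congr (_ * _); rewrite (reindex_inj rev_ord_inj) /=.
apply: eq_bigr => i _; have lt_ik := ltn_ord i; congr (_%:~R).
by rewrite subzn -?PoszD; [congr Posz; lia | lia].
Qed.

Lemma divz_mul_dvd (m d : nat) (u : int) : (d %| m)%N ->
  ((m%:Z * u) %/ d%:Z)%Z = (m %/ d)%N%:Z * u.
Proof. by move=> dvd_dm; rewrite -divz_mulAC ?dvdzE // divz_nat. Qed.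

Lemma invn_mul_intr_dvdz (N : nat) (z : int) : (N%:Z %| z)%Z ->
  exists w : int, N%:R^-1 * z%:~R = w%:~R :> rat.
Proof.
have [->|N_neq0 dvd_Nz] := eqVneq N 0%N.
  by rewrite dvd0z => /eqP->; exists 0; rewrite mulr0.
exists (z %/ N)%Z; rewrite -{1}(divzK dvd_Nz) intrM mulrC mulfK //.
by rewrite intr_eq0 eqz_nat.
Qed.

Lemma big_common_divisors (R : nmodType) (F : nat -> R) m1 m2 : (0 < m1)%N ->
  \sum_(1 <= d < m1.+1 | ((d %| m1) && (d %| m2))%N) F d =
  \sum_(d <- divisors (gcdn m1 m2)) F d.
Proof.
move=> m1_gt0; have g_gt0 : (0 < gcdn m1 m2)%N by rewrite gcdn_gt0 m1_gt0.
rewrite -big_filter; apply: perm_big; apply: uniq_perm.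
- by rewrite filter_uniq // iota_uniq.
- exact: divisors_uniq.
move=> d; rewrite mem_filter -dvdn_divisors // dvdn_gcd mem_index_iota.
have [/andP[dvd_dm1 _]|] //= := boolP ((d %| m1) && (d %| m2))%N.
by rewrite (dvdn_gt0 m1_gt0 dvd_dm1) ltnS dvdn_leq.
Qed.

Lemma nDT_summand_Posz (m1 m2 d t : nat) : (0 < m1)%N -> (d %| m1)%N -> (d %| m2)%N ->
  (moebius d)%:~R * (-1) ^ (((m1 + m2)%:Z * (t%:Z + 1)) %/ d%:Z)%Z
    * gbinom (((m1%:Z * t%:Z + m1%:Z) %/ d%:Z)%Z - 1) (m1 %/ d)
    * gbinom (((m2%:Z * t%:Z + m2%:Z) %/ d%:Z)%Z) (m2 %/ d)
  = (moebius d * sbprod t.+1 (m1 %/ d) (m2 %/ d))%:~R :> rat.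
Proof.
move=> m1_gt0 dvd_dm1 dvd_dm2.
have k1_gt0 : (0 < m1 %/ d)%N by rewrite divn_gt0 ?(dvdn_gt0 m1_gt0) // dvdn_leq.
have tS : t%:Z + 1 = t.+1%:Z by rewrite -addn1 PoszD.
have mulS (m : nat) : m%:Z * t%:Z + m%:Z = m%:Z * t.+1%:Z by rewrite -tS mulrDr mulr1.
rewrite !mulS tS !divz_mul_dvd ?dvdn_add // divnDl // -!PoszM -exprnP subzn; last first.
  by rewrite muln_gt0 k1_gt0.
by rewrite !gbinom_nat !intrM rmorphXn rmorphN1 -pmulrn natrM !mulrA.
Qed.

Lemma nDT_summand_Negz (m1 m2 d t : nat) : (0 < m1)%N -> (0 < m2)%N ->
  (d %| m1)%N -> (d %| m2)%N ->
  (moebius d)%:~R * (-1) ^ (((m1 + m2)%:Z * (Negz t + 1)) %/ d%:Z)%Z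
    * gbinom (((m1%:Z * Negz t + m1%:Z) %/ d%:Z)%Z - 1) (m1 %/ d)
    * gbinom (((m2%:Z * Negz t + m2%:Z) %/ d%:Z)%Z) (m2 %/ d)
  = (moebius d * sbprod t.+1 (m2 %/ d) (m1 %/ d))%:~R :> rat.
Proof.
move=> m1_gt0 m2_gt0 dvd_dm1 dvd_dm2.
have k1_gt0 : (0 < m1 %/ d)%N by rewrite divn_gt0 ?(dvdn_gt0 m1_gt0) // dvdn_leq.
have k2_gt0 : (0 < m2 %/ d)%N by rewrite divn_gt0 ?(dvdn_gt0 m2_gt0) // dvdn_leq.
have tN : Negz t + 1 = - t%:Z by rewrite NegzE -addn1 PoszD opprD addrK.
have mulN (m : nat) : m%:Z * Negz t + m%:Z = m%:Z * - t%:Z.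
  by rewrite -[X in _ + X]mulr1 -mulrDr tN.
rewrite !mulN tN !divz_mul_dvd ?dvdn_add // divnDl // !mulrN -!PoszM.
rewrite -exprnN -exprVn invrN1 -opprD -PoszD !gbinomN // addnAC addnK -!mulnSr.
rewrite !intrM rmorphXn rmorphN1 -pmulrn natrM.
have -> : (-1) ^+ ((m2 %/ d + m1 %/ d) * t.+1) =
          (-1) ^+ ((m1 %/ d + m2 %/ d) * t) * (-1) ^+ (m1 %/ d) * (-1) ^+ (m2 %/ d) :> rat.
  by rewrite -!exprD; congr (_ ^+ _); ring.
ring.
Qed.

Theorem theorem4p10 (m1 m2 : nat) (tau : int) :
  (1 <= m1)%N -> (1 <= m2)%N -> exists z : int, nDT m1 m2 tau = z%:~R.
Proof.
move=> m1_gt0 m2_gt0; rewrite /nDT big_common_divisors //.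
have dvd_gcd d : d \in divisors (gcdn m1 m2) -> ((d %| m1) && (d %| m2))%N.
  by rewrite -dvdn_divisors ?gcdn_gt0 ?m1_gt0 // dvdn_gcd.
case: tau => t.
  under eq_big_seq => d /dvd_gcd/andP[dvd_dm1 dvd_dm2] do rewrite nDT_summand_Posz //.
  rewrite -rmorph_sum; apply: invn_mul_intr_dvdz.
  exact: dvdz_sum_moebius_gcd.
under eq_big_seq => d /dvd_gcd/andP[dvd_dm1 dvd_dm2] do rewrite nDT_summand_Negz //.
rewrite -rmorph_sum addnC gcdnC; apply: invn_mul_intr_dvdz.
exact: dvdz_sum_moebius_gcd.
Qed.
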